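(* For $1\le i\le k$ let $G_i$ be an $r_i$-regular graph with $n_i$ vertices that admits a balanced labelling. Suppose $r_i\le n_j$ for all $1\le i,j\le k$, and that $r=\sum_{i=1}^k r_i$ is coprime to $n_1n_2\cdots n_k$. Then $G_1\Box\cdots\Box G_k$ is $\mathbb{Z}_{n_1\cdots n_k}$-distance antimagic.
   Context: For an $r$-regular graph $G$ with $n$ vertices, a balanced labelling is a bijection $f:V(G)\to\mathbb{Z}_n$ such that $\sum_{y\in N(x)} f(y)\equiv r f(x)\pmod n$ for every vertex $x$ ($N(x)$ the open neighbourhood). The Cartesian product $G_1\Box\cdots\Box G_k$ has vertex set $V(G_1)\times\cdots\times V(G_k)$, with two tuples adjacent iff they differ in exactly one coordinate $i$ and are adjacent there in $G_i$. For a graph $G$ with $n$ vertices, a $\mathbb{Z}_n$-distance antimagic labelling is a bijection $f:V(G)\to\mathbb{Z}_n$ such that the weights $w_f(x)=\sum_{y\in N(x)} f(y)$ (mod $n$) are pairwise distinct; $G$ is $\mathbb{Z}_n$-distance antimagic if such a labelling exists. *)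

From mathcomp Require Import all_boot.
Set Implicit Arguments. Unset Strict Implicit. Unset Printing Implicit Defensive.

Definition simple_graph (T : finType) (e : rel T) : Prop :=
  symmetric e /\ irreflexive e.

Definition regular (T : finType) (e : rel T) (r : nat) : Prop :=
  forall x : T, #|[pred y | e x y]| = r.

(* Labels in Z_n (n = #|T|) are represented by 'I_n; sums are taken mod n. *)
Definition balanced_labelling (T : finType) (e : rel T) (r : nat)
    (f : T -> 'I_#|T|) : Prop :=
  bijective f /\
  forall x : T, \sum_(y | e x y) (f y : nat) = r * f x %[mod #|T|].

Definition has_balanced_labelling (T : finType) (e : rel T) (r : nat) : Prop :=
  exists f : T -> 'I_#|T|, balanced_labelling e r f.

Definition prod_vertex (k : nat) (T : 'I_k -> finType) : finType :=
  {dffun forall i : 'I_k, T i}.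

Definition prod_adj (k : nat) (T : 'I_k -> finType) (e : forall i, rel (T i))
    : rel (prod_vertex T) :=
  fun x y => [exists i : 'I_k,
                e i (x i) (y i) && [forall j : 'I_k, (j != i) ==> (x j == y j)]].

Definition distance_antimagic_labelling (V : finType) (adj : rel V)
    (f : V -> 'I_#|V|) : Prop :=
  bijective f /\
  injective (fun x : V => (\sum_(y | adj x y) (f y : nat)) %% #|V|).

Definition Zn_distance_antimagic (V : finType) (adj : rel V) : Prop :=
  exists f : V -> 'I_#|V|, distance_antimagic_labelling adj f.

From mathcomp Require Import all_boot zify.
From Stdlib Require Import ClassicalEpsilon.
Set Implicit Arguments. Unset Strict Implicit. Unset Printing Implicit Defensive.

(* Let G_i have n_i vertices, a balanced labelling f_i, and let P_i be the
   product of the n_j with j < i.  Label a vertex x of the product by the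
   mixed-radix numeral L(x) = sum_i P_i * f_i(x_i).  Moving coordinate i of x to a
   neighbour z changes L by P_i * (f_i(z) - f_i(x_i)), so the weight is
     w(x) = r * L(x) + sum_i P_i * (S_i(x_i) - r_i * f_i(x_i)),
   where S_i(t) is the neighbour sum of t in G_i and r = sum_i r_i.  Balance
   makes the i-th correction a multiple of P_(i+1).  Hence if x and y agree
   below position m and w(x) = w(y) modulo P_(m+1), then r L(x) = r L(y) and,
   r being coprime to the order, L(x) = L(y) modulo P_(m+1); so x and y also
   agree at position m.  Induction on m gives injectivity of the weights. *)

Lemma cong_add d a b c e :
  a = b %[mod d] -> c = e %[mod d] -> a + c = b + e %[mod d].
Proof. by move=> Hab Hce; rewrite -modnDm Hab Hce modnDm. Qed.

Lemma cong_sum (I : Type) (s : seq I) (P : pred I) (F G : I -> nat) d :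
  (forall i, P i -> F i = G i %[mod d]) ->
  \sum_(i <- s | P i) F i = \sum_(i <- s | P i) G i %[mod d].
Proof. by move=> FG; apply: (big_ind2 (fun a b => a = b %[mod d])) => //; apply: cong_add. Qed.

Lemma cong_mul_cancel d c a b :
  coprime d c -> c * a = c * b %[mod d] -> a = b %[mod d].
Proof.
wlog le_ba : a b / b <= a => [wlog_le|] cop_dc.
  by case: (leqP b a) => [|/ltnW] le; [apply: wlog_le | move/esym/wlog_le/esym; apply].
move/eqP; rewrite eqn_mod_dvd ?leq_mul2l ?le_ba ?orbT // -mulnBr Gauss_dvdr //.
by rewrite -eqn_mod_dvd // => /eqP.
Qed.

Lemma cong_transfer d u u' a a' b b' p p' :
  u = u' %[mod d] -> a + b' = a' + b %[mod d] ->
  u + a = p + b -> u' + a' = p' + b' -> p = p' %[mod d].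
Proof.
move=> uu' ab E E'.
apply/eqP; rewrite -(eqn_modDr (b + a' + b')).
have -> : p + (b + a' + b') = u + (a + b') + a' by lia.
have -> : p' + (b + a' + b') = u' + (a' + b) + a' by lia.
by apply/eqP; apply: cong_add => //; apply: cong_add.
Qed.

Lemma sum_split_at k (F : 'I_k -> nat) (i0 : 'I_k) :
  \sum_i F i = \sum_(i : 'I_k | i < i0) F i + F i0 + \sum_(i : 'I_k | i0 < i) F i.
Proof.
rewrite (bigID (fun i : 'I_k => i < i0)) /= [X in _ + X](bigD1 i0) /= ?ltnn //.
rewrite addnA; congr (_ + _); apply: eq_bigl => i /=; rewrite -val_eqE /=.
by apply/andP/idP => [[]|]; lia.
Qed.

Section MixedRadix.
Variables (k : nat) (n : 'I_k -> nat).

Definition place (m : nat) : nat := \prod_(j : 'I_k | j < m) n j.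

Definition mixed_radix (d : 'I_k -> nat) : nat := \sum_(i < k) place i * d i.

Lemma place_dvd a b : a <= b -> place a %| place b.
Proof.
move=> le_ab; rewrite /place [X in _ %| X](bigID (fun j : 'I_k => j < a)) /=.
rewrite [X in _ %| X * _](eq_bigl (fun j : 'I_k => j < a)); first exact: dvdn_mulr.
by move=> j /=; apply/andP/idP => [[]//|?]; split=> //; lia.
Qed.

Lemma place_dvd_prod m : place m %| \prod_i n i.
Proof. by rewrite (bigID (fun j : 'I_k => j < m)) /= dvdn_mulr. Qed.

Lemma placeS (i : 'I_k) : place i.+1 = place i * n i.
Proof.
rewrite /place (bigD1 i) //= mulnC; congr (_ * _).
by apply: eq_bigl => j /=; rewrite -val_eqE /=; apply/andP/idP => [[]|]; lia.
Qed.

Lemma mixed_radix_digit (d d' : 'I_k -> nat) (m : 'I_k) :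
  (forall i, d i < n i) -> (forall i, d' i < n i) ->
  (forall j : 'I_k, j < m -> d j = d' j) ->
  mixed_radix d = mixed_radix d' %[mod place m.+1] -> d m = d' m.
Proof.
move=> dn d'n eq_low.
have place_gt0 : 0 < place m by apply: prodn_gt0 => j; apply: leq_ltn_trans (dn j).
have high_vanish (c : 'I_k -> nat) :
    (\sum_(i : 'I_k | m < i) place i * c i) %% place m.+1 = 0.
  by apply/eqP; apply: dvdn_sum => i lt_mi; apply/dvdn_mulr/place_dvd.
have low_eq : \sum_(i : 'I_k | i < m) place i * d i =
              \sum_(i : 'I_k | i < m) place i * d' i.
  by apply: eq_bigr => i /eq_low ->.
rewrite /mixed_radix !(sum_split_at _ m) -modnDmr high_vanish addn0.
rewrite -[in X in _ = X -> _]modnDmr high_vanish addn0 low_eq.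
move/eqP; rewrite eqn_modDl placeS -!muln_modr eqn_pmul2l //.
by rewrite !modn_small // => /eqP.
Qed.

Lemma place_scaled_cong (m i : 'I_k) a b :
  m <= i -> a = b %[mod n i] -> place i * a = place i * b %[mod place m.+1].
Proof.
move=> le_mi ab; have dvd_place : place m.+1 %| place i * n i.
  by rewrite -placeS place_dvd.
by rewrite -[LHS](modn_dvdm _ dvd_place) -[RHS](modn_dvdm _ dvd_place) -!muln_modr ab.
Qed.

End MixedRadix.

Lemma ffun_eq_by_prefix k (T : 'I_k -> finType) (x y : {dffun forall i, T i}) :
  (forall i : 'I_k, (forall j : 'I_k, j < i -> x j = y j) -> x i = y i) -> x = y.
Proof.
move=> step; apply/ffunP => i.
elim/ltn_ind: {i}(val i) {-2}i (erefl (val i)) => m IH i val_i.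
by apply: step => j; rewrite val_i => /IH; apply.
Qed.

Definition nbr_sum (V : finType) (e : rel V) (m : nat) (f : V -> 'I_m) (t : V)
    : nat :=
  \sum_(z | e t z) (f z : nat).

Section CartesianProduct.
Variables (k : nat) (T : 'I_k -> finType) (e : forall i : 'I_k, rel (T i)).
Arguments e : clear implicits.

Definition update (x : prod_vertex T) (i : 'I_k) (z : T i) : prod_vertex T :=
  [ffun j => dfwith x z j].

Lemma prod_nbr_sum (loopless : forall i, irreflexive (e i))
    (x : prod_vertex T) (F : prod_vertex T -> nat) :
  \sum_(y | prod_adj e x y) F y = \sum_(i < k) \sum_(z | e i (x i) z) F (update x z).
Proof.
pose moves (i : 'I_k) (y : prod_vertex T) :=
  e i (x i) (y i) && [forall j : 'I_k, (j != i) ==> (x j == y j)].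
have unique_move y : \sum_(i | moves i y) F y = if prod_adj e x y then F y else 0.
  rewrite /prod_adj; case: existsP => [[i0 move_i0] | no_move]; last first.
    by rewrite big_pred0 // => i; apply/negP => move_i; apply: no_move; exists i.
  rewrite (big_pred1 i0) // => i; apply/idP/eqP => [|->//].
  case/andP=> _ /forallP /(_ i0); case: eqVneq => [//|_ /= /eqP x_i0].
  by case/andP: move_i0; rewrite -x_i0 loopless.
have update_moves i (z : T i) : moves i (update x z) = e i (x i) z.
  rewrite /moves /update ffunE dfwith_in; apply: andb_idr => _.
  by apply/forallP => j; apply/implyP => ne_ji; rewrite ffunE dfwith_out // eq_sym.
rewrite big_mkcond (eq_bigr _ (fun y _ => esym (unique_move y))) /=.
rewrite (exchange_big_dep xpredT) //=; apply: eq_bigr => i _.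
rewrite (reindex_onto (fun z : T i => update x z) (fun y => y i)) /=.
  by apply: eq_bigl => z; rewrite update_moves /update ffunE dfwith_in eqxx andbT.
move=> y /andP [_ /forallP same]; apply/ffunP => j; rewrite /update ffunE.
case: (eqVneq i j) => [<-|ne_ij]; first by rewrite dfwith_in.
by rewrite dfwith_out //; apply/eqP; move/implyP: (same j); apply; rewrite eq_sym.
Qed.

Variable f : forall i, T i -> 'I_#|T i|.
Arguments f : clear implicits.

Local Notation place_of := (place (fun i => #|T i|)).

Definition prod_label (x : prod_vertex T) : nat :=
  mixed_radix (fun i => #|T i|) (fun i => f i (x i)).

Lemma prod_label_update (x : prod_vertex T) (i : 'I_k) (z : T i) :
  prod_label (update x z) + place_of i * f i (x i) =
  prod_label x + place_of i * f i z.
Proof.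
rewrite /prod_label /mixed_radix (bigD1 i) //= [in RHS](bigD1 i) //=.
rewrite /update ffunE dfwith_in addnAC [RHS]addnAC; congr (_ + _); first exact: addnC.
by apply: eq_bigr => j ne_ji; rewrite ffunE dfwith_out // eq_sym.
Qed.

Lemma prod_weight (r : 'I_k -> nat) (loopless : forall i, irreflexive (e i))
    (reg : forall i, regular (e i) (r i)) (x : prod_vertex T) :
  \sum_(y | prod_adj e x y) prod_label y + \sum_(i < k) r i * (place_of i * f i (x i)) =
  (\sum_(i < k) r i) * prod_label x + \sum_(i < k) place_of i * nbr_sum (e i) (f i) (x i).
Proof.
have const_sum i c : \sum_(z | e i (x i) z) c = r i * c.
  by rewrite big_const iter_addn_0 mulnC -(reg i (x i)).
have coord i : \sum_(z | e i (x i) z) prod_label (update x z)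
                 + r i * (place_of i * f i (x i)) =
               r i * prod_label x + place_of i * nbr_sum (e i) (f i) (x i).
  rewrite -const_sum -big_split /= (eq_bigr _ (fun z _ => prod_label_update x z)).
  by rewrite big_split /= const_sum /nbr_sum -big_distrr.
by rewrite prod_nbr_sum // -big_split /= (eq_bigr _ (fun i _ => coord i)) big_split /= big_distrl.
Qed.

Lemma prod_label_sep (f_inj : forall i, injective (f i)) (x y : prod_vertex T) :
  (forall i : 'I_k, (forall j : 'I_k, j < i -> x j = y j) ->
     prod_label x = prod_label y %[mod place_of i.+1]) -> x = y.
Proof.
move=> label_cong; apply: ffun_eq_by_prefix => i low; apply/f_inj/val_inj.
apply: (mixed_radix_digit _ _ _ (label_cong i low)) => [j|j|j /low -> //];
  exact: ltn_ord.
Qed.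

Lemma card_prod_vertex : #|prod_vertex T| = \prod_(i < k) #|T i|.
Proof. by rewrite card_dep_ffun foldrE big_map big_enum. Qed.

(* With balanced labellings f i, the correction terms of prod_weight for two
   vertices agreeing below position m cancel modulo the place value of m + 1:
   below m they coincide, and from m on each is a multiple of place m.+1 away
   from its counterpart by the balance condition. *)
Lemma corrections_cong (r : 'I_k -> nat)
    (bal : forall i, balanced_labelling (e i) (r i) (f i))
    (x y : prod_vertex T) (m : 'I_k) :
  (forall j : 'I_k, j < m -> x j = y j) ->
  \sum_(i < k) r i * (place_of i * f i (x i))
    + \sum_(i < k) place_of i * nbr_sum (e i) (f i) (y i) =
  \sum_(i < k) r i * (place_of i * f i (y i))
    + \sum_(i < k) place_of i * nbr_sum (e i) (f i) (x i) %[mod place_of m.+1].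
Proof.
move=> low; rewrite -!big_split; apply: cong_sum => i _ /=.
case: (ltnP i m) => [/low -> // | le_mi].
have bal_place (z : prod_vertex T) :
    r i * (place_of i * f i (z i)) = place_of i * nbr_sum (e i) (f i) (z i)
      %[mod place_of m.+1].
  rewrite mulnCA; apply: place_scaled_cong => //.
  by case: (bal i) => _ ->.
by rewrite addnC; apply: cong_add => //; apply/esym.
Qed.

Lemma prod_label_inj_mod (f_inj : forall i, injective (f i)) (x y : prod_vertex T) :
  prod_label x = prod_label y %[mod \prod_(i < k) #|T i|] -> x = y.
Proof.
move=> label_xy; apply: prod_label_sep => // i _.
have dvd_place := place_dvd_prod (fun i => #|T i|) i.+1.
by rewrite -[LHS](modn_dvdm _ dvd_place) -[RHS](modn_dvdm _ dvd_place) label_xy.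
Qed.

(* Digit by digit, prod_weight and corrections_cong turn a congruence of
   weights into one of r times the labels, and r can be cancelled. *)
Lemma prod_weight_inj_mod (r : 'I_k -> nat)
    (loopless : forall i, irreflexive (e i)) (reg : forall i, regular (e i) (r i))
    (bal : forall i, balanced_labelling (e i) (r i) (f i))
    (cop : coprime (\sum_(i < k) r i) (\prod_(i < k) #|T i|)) (x y : prod_vertex T) :
  \sum_(x' | prod_adj e x x') prod_label x' = \sum_(y' | prod_adj e y y') prod_label y'
    %[mod \prod_(i < k) #|T i|] -> x = y.
Proof.
move=> weight_xy; have f_inj i : injective (f i) by case: (bal i) => /bij_inj.
apply: prod_label_sep => // i low.
have dvd_place := place_dvd_prod (fun i => #|T i|) i.+1.
apply: (@cong_mul_cancel _ (\sum_(i < k) r i)).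
  by rewrite coprime_sym; apply: coprime_dvdr cop.
apply: cong_transfer (prod_weight loopless reg x) (prod_weight loopless reg y).
  by rewrite -[LHS](modn_dvdm _ dvd_place) -[RHS](modn_dvdm _ dvd_place) weight_xy.
exact: corrections_cong.
Qed.

End CartesianProduct.

Theorem mainTheorem12 (k : nat) (T : 'I_k -> finType)
    (e : forall i : 'I_k, rel (T i)) (r : 'I_k -> nat) :
  0 < k ->
  (forall i, simple_graph (e i)) ->
  (forall i, regular (e i) (r i)) ->
  (forall i, has_balanced_labelling (e i) (r i)) ->
  (forall i j : 'I_k, r i <= #|T j|) ->
  coprime (\sum_(i < k) r i) (\prod_(i < k) #|T i|) ->
  Zn_distance_antimagic (prod_adj e).
Proof.
move=> _ simple reg has_bal _ cop.
have loopless i : irreflexive (e i) by case: (simple i).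
have [f bal] : exists f : forall i, T i -> 'I_#|T i|,
    forall i, balanced_labelling (e i) (r i) (f i).
  exists (fun i => proj1_sig (constructive_indefinite_description _ (has_bal i))).
  by move=> i; apply: proj2_sig.
have card_gt0 (x : prod_vertex T) : 0 < #|prod_vertex T| by apply/card_gt0P; exists x.
pose lab x : 'I_#|prod_vertex T| := Ordinal (ltn_pmod (prod_label f x) (card_gt0 x)).
have lab_inj : injective lab.
  move=> x y /(congr1 val) /=; rewrite card_prod_vertex => label_xy.
  by apply: (prod_label_inj_mod _ label_xy) => i; case: (bal i) => /bij_inj.
exists lab; split; first by apply: inj_card_bij; rewrite // card_ord.
move=> x y /=; rewrite modn_summ [in X in _ = X -> _]modn_summ card_prod_vertex.
exact: prod_weight_inj_mod.
Qed.
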